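(* Let $a\in(0,1)$, $b>0$, $m\in\mathbb{R}$, and for $t\in(0,1)$ let \[ G_m(t)=F(1-a,b;2b+1;t)-(1-t)^{1-m}F(1-a,b+1;2b+1;t). \] Let $m_0=\frac{a+2b}{1+2b}$ and define \[ E^+=\{m\le m_0\}\cap\Bigl(\{a+b\ge1>m\}\cup\{m<a+b<1\}\cup\{m=a+b\le\tfrac12\}\Bigr), \] \[ E^-=\{m\ge m_0\}\cap\Bigl(\{a+b\ge1,\ m\ge1\}\cup\{\tfrac12\le m=a+b<1\}\cup\{a+b<1,\ a+b<m\}\Bigr), \] as sets of triples $(a,b,m)$. (i) If $G_m(t)\ge0$ for all $t\in(0,1)$, then $(a,b,m)\in E^+$. (ii) If $G_m(t)\le0$ for all $t\in(0,1)$, then $(a,b,m)\in E^-$.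
   Context: For real $a,b,c$ with $c\notin\{0,-1,-2,\dots\}$, $F(a,b;c;x)=\sum_{n\ge0}\frac{(a)_n(b)_n}{(c)_n}\frac{x^n}{n!}$ for $x\in(-1,1)$, where $(a)_0=1$ and $(a)_n=a(a+1)\cdots(a+n-1)$. *)

From Stdlib Require Import Reals.
From Coquelicot Require Import Coquelicot.
Open Scope R_scope.

Fixpoint poch (a : R) (n : nat) : R :=
  match n with
  | O => 1
  | S k => poch a k * (a + INR k)
  end.

Definition hyp_term (a b c x : R) (n : nat) : R :=
  poch a n * poch b n / poch c n * x ^ n / INR (Stdlib.Arith.Factorial.fact n).

Definition hypF (a b c x : R) : R := Series (hyp_term a b c x).

Definition Gm (a b m t : R) : R :=
  hypF (1 - a) b (2 * b + 1) t
  - Rpower (1 - t) (1 - m) * hypF (1 - a) (b + 1) (2 * b + 1) t.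

Definition m0 (a b : R) : R := (a + 2 * b) / (1 + 2 * b).

Definition E_plus (a b m : R) : Prop :=
  m <= m0 a b /\
  ((a + b >= 1 /\ 1 > m) \/ (m < a + b /\ a + b < 1) \/ (m = a + b /\ a + b <= 1/2)).

Definition E_minus (a b m : R) : Prop :=
  m >= m0 a b /\
  ((a + b >= 1 /\ m >= 1) \/ (1/2 <= m /\ m = a + b /\ a + b < 1) \/ (a + b < 1 /\ a + b < m)).

(* G_m(0) = 0 and G_m'(0) = m0 - m, so a one-signed G_m forces the corresponding
   inequality between m and m0.  The other constraints come from t -> 1.  Comparing
   coefficient ratios with those of the binomial series of (1 - t)^(-s) gives
   F(al,be;ga;t) <= K (1 - t)^(-s) as soon as al + be < ga + s, and
   (1 - t)^(-s) <= F(al,be;ga;t) when (ga + n)(s + n) <= (al + n)(be + n) for all n.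
   Hence if a + b < min(1, m) the second term of G_m, of order at least
   (1 - t)^(a+b-m), outgrows the first, while if m < min(1, a + b) the second term
   tends to 0 and G_m stays near F(1-a,b;2b+1;t) >= 1. *)

From Stdlib Require Import Reals Lra Lia Psatz Factorial.
From Coquelicot Require Import Coquelicot.
Open Scope R_scope.

Lemma poch_pos x n : 0 < x -> 0 < poch x n.
Proof.
  intros Hx; induction n as [|n IH]; simpl; [lra|].
  pose proof (pos_INR n); apply Rmult_lt_0_compat; lra.
Qed.

Lemma Rpower_pos x y : 0 < Rpower x y.
Proof. apply exp_pos. Qed.

Lemma Rpower_1_base y : Rpower 1 y = 1.
Proof. unfold Rpower; rewrite ln_1, Rmult_0_r; apply exp_0. Qed.

Definition hyp_coef (al be ga : R) (n : nat) : R :=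
  poch al n * poch be n / poch ga n / INR (fact n).

Definition binom_coef (s : R) (n : nat) : R := poch s n / INR (fact n).

Lemma INR_fact_S n : INR (fact (S n)) = (INR n + 1) * INR (fact n).
Proof. rewrite <- S_INR; apply mult_INR. Qed.

Lemma hyp_coef_0 al be ga : hyp_coef al be ga 0 = 1.
Proof. unfold hyp_coef; simpl; field. Qed.

Lemma binom_coef_0 s : binom_coef s 0 = 1.
Proof. unfold binom_coef; simpl; field. Qed.

Lemma hyp_coef_pos al be ga n : 0 < al -> 0 < be -> 0 < ga -> 0 < hyp_coef al be ga n.
Proof.
  intros Ha Hb Hg; unfold hyp_coef.
  pose proof (poch_pos al n Ha); pose proof (poch_pos be n Hb).
  pose proof (poch_pos ga n Hg); pose proof (INR_fact_lt_0 n).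
  repeat apply Rdiv_lt_0_compat; auto; apply Rmult_lt_0_compat; auto.
Qed.

Lemma binom_coef_pos s n : 0 < s -> 0 < binom_coef s n.
Proof. intros Hs; apply Rdiv_lt_0_compat; [apply poch_pos; auto | apply INR_fact_lt_0]. Qed.

Lemma hyp_coef_S al be ga n : 0 < ga -> hyp_coef al be ga (S n) =
  hyp_coef al be ga n * ((al + INR n) * (be + INR n) / ((ga + INR n) * (INR n + 1))).
Proof.
  intros Hg; unfold hyp_coef; rewrite INR_fact_S; simpl poch.
  pose proof (poch_pos ga n Hg); pose proof (INR_fact_lt_0 n); pose proof (pos_INR n).
  field; repeat split; lra.
Qed.

Lemma binom_coef_S s n : binom_coef s (S n) = binom_coef s n * ((s + INR n) / (INR n + 1)).
Proof.
  unfold binom_coef; rewrite INR_fact_S; simpl poch.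
  pose proof (INR_fact_lt_0 n); pose proof (pos_INR n).
  field; split; lra.
Qed.

Lemma hyp_binom_coef_cross al be ga s n : 0 < ga ->
  hyp_coef al be ga (S n) * binom_coef s n * ((ga + INR n) * (s + INR n)) =
  binom_coef s (S n) * hyp_coef al be ga n * ((al + INR n) * (be + INR n)).
Proof.
  intros Hg; rewrite hyp_coef_S, binom_coef_S by exact Hg.
  pose proof (pos_INR n); field; split; lra.
Qed.

Lemma hyp_term_coef al be ga x n : hyp_term al be ga x n = hyp_coef al be ga n * x ^ n.
Proof. unfold hyp_term, hyp_coef, Rdiv; ring. Qed.

Lemma hypF_PSeries al be ga x : hypF al be ga x = PSeries (hyp_coef al be ga) x.
Proof. apply Series_ext, hyp_term_coef. Qed.

Section RatioComparison.

Variables c d : nat -> R.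
Hypothesis c_pos : forall n, 0 < c n.
Hypothesis d_pos : forall n, 0 < d n.

Lemma ratio_le_tail N :
  (forall n, (N <= n)%nat -> c (S n) * d n <= d (S n) * c n) ->
  forall k, c (N + k)%nat * d N <= c N * d (N + k)%nat.
Proof.
  intros Hstep k; induction k as [|k IH]; [rewrite Nat.add_0_r; lra|].
  rewrite Nat.add_succ_r.
  pose proof (Hstep (N + k)%nat ltac:(lia)) as Hk.
  pose proof (d_pos (N + k)%nat); pose proof (d_pos (S (N + k))); pose proof (d_pos N).
  apply Rmult_le_reg_r with (d (N + k)%nat); [assumption | nra].
Qed.

Lemma prefix_le_scaled M : exists K, forall n, (n <= M)%nat -> c n <= K * d n.
Proof.
  induction M as [|M [K HK]].
  - exists (c 0%nat / d 0%nat); intros n Hn; replace n with 0%nat by lia.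
    pose proof (d_pos 0%nat); right; field; lra.
  - exists (Rmax K (c (S M) / d (S M))); intros n Hn.
    pose proof (d_pos n).
    destruct (Nat.eq_dec n (S M)) as [->|Hne].
    + apply Rle_trans with (c (S M) / d (S M) * d (S M)); [right; field; lra|].
      apply Rmult_le_compat_r; [lra | apply Rmax_r].
    + apply Rle_trans with (K * d n); [apply HK; lia|].
      apply Rmult_le_compat_r; [lra | apply Rmax_l].
Qed.

Lemma ratio_le_bigO N :
  (forall n, (N <= n)%nat -> c (S n) * d n <= d (S n) * c n) ->
  exists K, 0 < K /\ forall n, c n <= K * d n.
Proof.
  intros Hstep; destruct (prefix_le_scaled N) as [K HK].
  set (K' := Rmax K (c N / d N)).
  assert (Hbound : forall n, c n <= K' * d n).
  { intros n; pose proof (d_pos n); destruct (Compare_dec.le_lt_dec n N) as [Hn|Hn].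
    - apply Rle_trans with (K * d n); [auto | apply Rmult_le_compat_r; [lra | apply Rmax_l]].
    - replace n with (N + (n - N))%nat by lia.
      pose proof (ratio_le_tail N Hstep (n - N)).
      pose proof (d_pos N); pose proof (d_pos (N + (n - N))%nat).
      apply Rle_trans with (c N / d N * d (N + (n - N))%nat).
      + apply Rmult_le_reg_r with (d N); [lra|].
        replace (c N / d N * d (N + (n - N))%nat * d N) with (c N * d (N + (n - N))%nat)
          by (field; lra); lra.
      + apply Rmult_le_compat_r; [lra | apply Rmax_r]. }
  exists K'; split; [|exact Hbound].
  pose proof (Hbound 0%nat); pose proof (c_pos 0%nat); pose proof (d_pos 0%nat).
  apply Rmult_lt_reg_r with (d 0%nat); lra.
Qed.

End RatioComparison.

Lemma hyp_coef_le_binom_coef al be ga s :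
  0 < al -> 0 < be -> 0 < ga -> 0 < s -> al + be < ga + s ->
  exists K, 0 < K /\ forall n, hyp_coef al be ga n <= K * binom_coef s n.
Proof.
  intros Ha Hb Hg Hs Hgap.
  destruct (INR_archimed (ga + s - al - be) (al * be) ltac:(lra)) as [N HN].
  apply (ratio_le_bigO _ _ (fun n => hyp_coef_pos al be ga n Ha Hb Hg)
    (fun n => binom_coef_pos s n Hs) N).
  intros n Hn.
  assert (HNn : INR N <= INR n) by (apply le_INR; exact Hn).
  assert (Hfactor : (al + INR n) * (be + INR n) <= (ga + INR n) * (s + INR n)) by nra.
  pose proof (hyp_binom_coef_cross al be ga s n Hg) as Hcross.
  pose proof (hyp_coef_pos al be ga n Ha Hb Hg); pose proof (binom_coef_pos s (S n) Hs).
  pose proof (pos_INR n).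
  apply Rmult_le_reg_r with ((ga + INR n) * (s + INR n)); [nra|].
  rewrite Hcross; apply Rmult_le_compat_l; [nra | exact Hfactor].
Qed.

Lemma binom_coef_le_hyp_coef al be ga s n :
  0 < al -> 0 < be -> 0 < ga -> 0 < s ->
  (forall x, 0 <= x -> (ga + x) * (s + x) <= (al + x) * (be + x)) ->
  binom_coef s n <= hyp_coef al be ga n.
Proof.
  intros Ha Hb Hg Hs Hfactor.
  assert (Hstep : forall k, (0 <= k)%nat ->
    binom_coef s (S k) * hyp_coef al be ga k <= hyp_coef al be ga (S k) * binom_coef s k).
  { intros k _.
    pose proof (hyp_binom_coef_cross al be ga s k Hg) as Hcross.
    pose proof (hyp_coef_pos al be ga k Ha Hb Hg); pose proof (binom_coef_pos s (S k) Hs).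
    pose proof (pos_INR k); pose proof (Hfactor (INR k) (pos_INR k)).
    apply Rmult_le_reg_r with ((ga + INR k) * (s + INR k)); [nra|].
    replace (hyp_coef al be ga (S k) * binom_coef s k * ((ga + INR k) * (s + INR k)))
      with (binom_coef s (S k) * hyp_coef al be ga k * ((al + INR k) * (be + INR k)))
      by (symmetry; exact Hcross).
    apply Rmult_le_compat_l; nra. }
  pose proof (ratio_le_tail _ _ (fun k => hyp_coef_pos al be ga k Ha Hb Hg) 0 Hstep n) as Htail.
  rewrite binom_coef_0, hyp_coef_0 in Htail; simpl in Htail; lra.
Qed.

Lemma binom_coef_radius s : 0 < s -> CV_radius (binom_coef s) = 1.
Proof.
  intros Hs.
  rewrite (CV_radius_finite_DAlembert (binom_coef s) 1); [now rewrite Rinv_1 | | lra |].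
  - intro n; pose proof (binom_coef_pos s n Hs); lra.
  - apply is_lim_seq_ext with (fun n => 1 + (s - 1) * / (INR n + 1)).
    + intro n; rewrite binom_coef_S.
      pose proof (binom_coef_pos s n Hs); pose proof (pos_INR n).
      rewrite Rabs_pos_eq; [field; lra|].
      apply Rlt_le, Rdiv_lt_0_compat; [|lra].
      apply Rmult_lt_0_compat; [lra | apply Rdiv_lt_0_compat; lra].
    + replace (Finite 1) with (Finite (1 + (s - 1) * 0)) by (f_equal; ring).
      apply is_lim_seq_plus'; [apply is_lim_seq_const|].
      assert (Hinv : is_lim_seq (fun n => / (INR n + 1)) 0).
      { apply is_lim_seq_ext with (fun n => / INR (S n)); [intro; rewrite S_INR; reflexivity|].
        replace (Finite 0) with (Rbar_inv p_infty) by reflexivity.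
        apply is_lim_seq_inv; [apply -> is_lim_seq_incr_1; apply is_lim_seq_INR | discriminate]. }
      exact (is_lim_seq_scal_l _ (s - 1) 0 Hinv).
Qed.

Lemma binom_series_ode s x : 0 < s -> Rabs x < 1 ->
  (1 - x) * PSeries (PS_derive (binom_coef s)) x = s * PSeries (binom_coef s) x.
Proof.
  intros Hs Hx.
  assert (Hr : Rbar_lt (Rabs x) (CV_radius (binom_coef s))) by (rewrite binom_coef_radius; auto).
  pose proof (ex_pseries_incr_1 _ _ (ex_pseries_derive _ _ Hr)) as Hex.
  replace ((1 - x) * PSeries (PS_derive (binom_coef s)) x) with
    (PSeries (PS_derive (binom_coef s)) x - x * PSeries (PS_derive (binom_coef s)) x) by ring.
  rewrite <- PSeries_incr_1, <- PSeries_minus, <- PSeries_scal by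
    (auto using ex_pseries_derive).
  apply PSeries_ext; intro n.
  unfold PS_minus, PS_scal, PS_incr_1, PS_derive.
  change (plus ?u (opp ?v)) with (u - v); change (scal s ?y) with (s * y).
  destruct n as [|n].
  - change zero with 0; rewrite binom_coef_S, binom_coef_0; simpl; field.
  - rewrite (binom_coef_S s (S n)), (S_INR (S n)); pose proof (pos_INR (S n)); field; lra.
Qed.

Lemma PSeries_binom_coef s t : 0 < s -> Rabs t < 1 ->
  PSeries (binom_coef s) t = Rpower (1 - t) (- s).
Proof.
  intros Hs Ht.
  assert (Hr : forall x, Rabs x < 1 -> Rbar_lt (Rabs x) (CV_radius (binom_coef s)))
    by (intros; rewrite binom_coef_radius; auto).
  set (h := fun y => PSeries (binom_coef s) y * Rpower (1 - y) s).
  (* [h] is constant since its derivative vanishes by the binomial ODE. *)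
  assert (Hderiv : forall x, Rabs x < 1 -> is_derive h x 0).
  { intros x Hx; apply Rabs_def2 in Hx.
    assert (Hpow : is_derive (fun y => Rpower (1 - y) s) x (Rpower (1 - x) s * (- s / (1 - x)))).
    { unfold Rpower; auto_derive; [lra|]. replace (1 + - x) with (1 - x) by ring; field; lra. }
    pose proof (is_derive_mult _ _ x _ _ (is_derive_PSeries _ _ (Hr x ltac:(apply Rabs_def1; lra)))
      Hpow ltac:(intros; apply Rmult_comm)) as Hprod.
    pose proof (binom_series_ode s x Hs ltac:(apply Rabs_def1; lra)) as Hode.
    replace 0 with (PSeries (PS_derive (binom_coef s)) x * Rpower (1 - x) s +
      PSeries (binom_coef s) x * (Rpower (1 - x) s * (- s / (1 - x)))); [exact Hprod|].
    replace (PSeries (PS_derive (binom_coef s)) x) with (s * PSeries (binom_coef s) x / (1 - x))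
      by (rewrite <- Hode; field; lra).
    field; lra. }
  assert (Hinside : forall x, Rmin 0 t <= x <= Rmax 0 t -> Rabs x < 1).
  { intros x Hx; apply Rabs_def2 in Ht; apply Rabs_def1;
      unfold Rmin, Rmax in Hx; destruct (Rle_dec 0 t); lra. }
  destruct (MVT_gen h 0 t (fun _ => 0)) as [c [_ Hc]].
  - intros x Hx; apply Hderiv, Hinside; lra.
  - intros x Hx; apply derivable_continuous_pt; exists 0.
    apply is_derive_Reals, Hderiv, Hinside; exact Hx.
  - unfold h in Hc; rewrite PSeries_0, binom_coef_0, Rminus_0_r, Rpower_1_base in Hc.
    rewrite Rpower_Ropp; pose proof (Rpower_pos (1 - t) s).
    apply Rmult_eq_reg_r with (Rpower (1 - t) s); [|lra]; field_simplify; lra.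
Qed.

Lemma hypF_le_Rpower al be ga s :
  0 < al -> 0 < be -> 0 < ga -> 0 < s -> al + be < ga + s ->
  exists K, 0 < K /\ forall t, 0 <= t < 1 ->
    ex_series (hyp_term al be ga t) /\ hypF al be ga t <= K * Rpower (1 - t) (- s).
Proof.
  intros Ha Hb Hg Hs Hgap.
  destruct (hyp_coef_le_binom_coef al be ga s Ha Hb Hg Hs Hgap) as [K [HK Hcoef]].
  exists K; split; [exact HK|]; intros t Ht.
  assert (Htabs : Rabs t < 1) by (rewrite Rabs_pos_eq; lra).
  assert (Hbinom : ex_series (fun n => K * (binom_coef s n * t ^ n))).
  { apply (ex_series_scal_l K (fun n => binom_coef s n * t ^ n)).
    apply ex_series_Rabs, CV_disk_inside; rewrite binom_coef_radius; auto. }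
  assert (Hterm : forall n, 0 <= hyp_term al be ga t n <= K * (binom_coef s n * t ^ n)).
  { intro n; rewrite hyp_term_coef.
    pose proof (hyp_coef_pos al be ga n Ha Hb Hg); pose proof (pow_le t n ltac:(lra)).
    pose proof (Hcoef n); split; nra. }
  assert (Hex : ex_series (hyp_term al be ga t)).
  { apply (ex_series_le (hyp_term al be ga t) (fun n => K * (binom_coef s n * t ^ n)));
      [intro n | exact Hbinom].
    change norm with Rabs; rewrite Rabs_pos_eq; apply Hterm. }
  split; [exact Hex|].
  unfold hypF; apply Rle_trans with (Series (fun n => K * (binom_coef s n * t ^ n))).
  - apply Series_le; assumption.
  - rewrite Series_scal_l; fold (PSeries (binom_coef s) t).
    rewrite PSeries_binom_coef by assumption; lra.
Qed.

Lemma ex_series_hyp_term al be ga t : 0 < al -> 0 < be -> 0 < ga -> 0 <= t < 1 ->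
  ex_series (hyp_term al be ga t).
Proof.
  intros Ha Hb Hg Ht.
  destruct (hypF_le_Rpower al be ga (al + be) Ha Hb Hg ltac:(lra) ltac:(lra)) as [K [_ HK]].
  apply (HK t Ht).
Qed.

Lemma hypF_ge_Rpower al be ga s t :
  0 < al -> 0 < be -> 0 < ga -> 0 < s ->
  (forall x, 0 <= x -> (ga + x) * (s + x) <= (al + x) * (be + x)) -> 0 <= t < 1 ->
  Rpower (1 - t) (- s) <= hypF al be ga t.
Proof.
  intros Ha Hb Hg Hs Hfactor Ht.
  rewrite <- PSeries_binom_coef by (auto; rewrite Rabs_pos_eq; lra).
  apply Series_le; [|apply ex_series_hyp_term; auto]; intro n.
  rewrite hyp_term_coef.
  pose proof (binom_coef_pos s n Hs); pose proof (pow_le t n ltac:(lra)).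
  pose proof (binom_coef_le_hyp_coef al be ga s n Ha Hb Hg Hs Hfactor); split; nra.
Qed.

Lemma hypF_ge_1 al be ga t : 0 < al -> 0 < be -> 0 < ga -> 0 <= t < 1 ->
  1 <= hypF al be ga t.
Proof.
  intros Ha Hb Hg Ht.
  pose proof (ex_series_hyp_term al be ga t Ha Hb Hg Ht) as Hex.
  unfold hypF; rewrite Series_incr_1 by exact Hex.
  rewrite hyp_term_coef, hyp_coef_0, pow_O.
  enough (0 <= Series (fun k => hyp_term al be ga t (S k))) by lra.
  replace 0 with (Series (fun k => 0 * hyp_term al be ga t (S k)))
    by (rewrite Series_scal_l; ring).
  apply Series_le; [|exact (proj1 (ex_series_incr_1 _) Hex)]; intro n.
  rewrite Rmult_0_l, hyp_term_coef; pose proof (hyp_coef_pos al be ga (S n) Ha Hb Hg).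
  pose proof (pow_le t (S n) ltac:(lra)); split; nra.
Qed.

Lemma hyp_coef_radius_pos al be ga : 0 < al -> 0 < be -> 0 < ga ->
  Rbar_lt 0 (CV_radius (hyp_coef al be ga)).
Proof.
  intros Ha Hb Hg.
  assert (Hdisk : CV_disk (hyp_coef al be ga) (1 / 2)).
  { apply ex_series_ext with (hyp_term al be ga (1 / 2));
      [|apply ex_series_hyp_term; auto; lra].
    intro n; rewrite hyp_term_coef, Rabs_pos_eq; [reflexivity|].
    pose proof (hyp_coef_pos al be ga n Ha Hb Hg); pose proof (pow_le (1 / 2) n ltac:(lra)); nra. }
  pose proof (proj1 (Lub_Rbar_correct (CV_disk (hyp_coef al be ga))) (1 / 2) Hdisk).
  unfold CV_radius; destruct (Lub_Rbar (CV_disk (hyp_coef al be ga))); simpl in *; lra.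
Qed.

Lemma hypF_0 al be ga : hypF al be ga 0 = 1.
Proof. rewrite hypF_PSeries, PSeries_0; apply hyp_coef_0. Qed.

Lemma is_derive_hypF_0 al be ga : 0 < al -> 0 < be -> 0 < ga ->
  is_derive (hypF al be ga) 0 (al * be / ga).
Proof.
  intros Ha Hb Hg.
  apply is_derive_ext with (PSeries (hyp_coef al be ga)); [intro; symmetry; apply hypF_PSeries|].
  replace (al * be / ga) with (PSeries (PS_derive (hyp_coef al be ga)) 0).
  - apply is_derive_PSeries; rewrite Rabs_R0; apply hyp_coef_radius_pos; auto.
  - rewrite PSeries_0; unfold PS_derive; rewrite hyp_coef_S, hyp_coef_0 by exact Hg.
    simpl; field; lra.
Qed.

Lemma Gm_0 a b m : Gm a b m 0 = 0.
Proof. unfold Gm; rewrite !hypF_0, Rminus_0_r, Rpower_1_base; ring. Qed.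

Lemma is_derive_Gm_0 a b m : 0 < a < 1 -> 0 < b -> is_derive (Gm a b m) 0 (m0 a b - m).
Proof.
  intros Ha Hb.
  pose proof (is_derive_hypF_0 (1 - a) b (2 * b + 1) ltac:(lra) Hb ltac:(lra)) as D1.
  pose proof (is_derive_hypF_0 (1 - a) (b + 1) (2 * b + 1) ltac:(lra) ltac:(lra) ltac:(lra)) as D2.
  assert (Dpow : is_derive (fun t => Rpower (1 - t) (1 - m)) 0 (m - 1)).
  { unfold Rpower; auto_derive; [lra|].
    replace (1 + - 0) with 1 by ring; rewrite ln_1, Rmult_0_r, exp_0; field. }
  pose proof (is_derive_minus _ _ 0 _ _ D1
    (is_derive_mult _ _ 0 _ _ Dpow D2 ltac:(intros; apply Rmult_comm))) as DG.
  rewrite hypF_0, Rminus_0_r, Rpower_1_base in DG.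
  replace (m0 a b - m) with ((1 - a) * b / (2 * b + 1) -
    ((m - 1) * 1 + 1 * ((1 - a) * (b + 1) / (2 * b + 1)))) by (unfold m0; field; lra).
  exact DG.
Qed.

Lemma is_derive_nonneg_of_right_ge f x e D : 0 < e -> is_derive f x D ->
  (forall t, x < t < x + e -> f x <= f t) -> 0 <= D.
Proof.
  intros He Hd Hge; apply is_derive_Reals in Hd.
  destruct (Rle_lt_dec 0 D) as [|HD]; [assumption|]; exfalso.
  destruct (Hd (- D) ltac:(lra)) as [del Hdel]; pose proof (cond_pos del).
  set (h := Rmin (del / 2) (e / 2)).
  assert (0 < h) by (apply Rmin_glb_lt; lra).
  assert (h <= del / 2) by apply Rmin_l; assert (h <= e / 2) by apply Rmin_r.
  specialize (Hdel h ltac:(lra) ltac:(rewrite Rabs_pos_eq; lra)).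
  specialize (Hge (x + h) ltac:(lra)).
  assert (0 <= (f (x + h) - f x) / h)
    by (apply Rmult_le_pos; [lra | apply Rlt_le, Rinv_0_lt_compat; lra]).
  apply Rabs_lt_between in Hdel; lra.
Qed.

Lemma Gm_nonneg_le_m0 a b m : 0 < a < 1 -> 0 < b ->
  (forall t, 0 < t < 1 -> 0 <= Gm a b m t) -> m <= m0 a b.
Proof.
  intros Ha Hb Hpos.
  enough (0 <= m0 a b - m) by lra.
  apply (is_derive_nonneg_of_right_ge (Gm a b m) 0 1); [lra | apply is_derive_Gm_0; auto|].
  intros t Ht; rewrite Gm_0; apply Hpos; lra.
Qed.

Lemma Gm_nonpos_ge_m0 a b m : 0 < a < 1 -> 0 < b ->
  (forall t, 0 < t < 1 -> Gm a b m t <= 0) -> m0 a b <= m.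
Proof.
  intros Ha Hb Hneg.
  enough (0 <= - (m0 a b - m)) by lra.
  apply (is_derive_nonneg_of_right_ge (fun t => - Gm a b m t) 0 1); [lra| |].
  - apply (is_derive_opp (Gm a b m)), is_derive_Gm_0; auto.
  - intros t Ht; rewrite Gm_0; pose proof (Hneg t ltac:(lra)); lra.
Qed.

Lemma Rpower_lt_eps q eps : 0 < q -> 0 < eps -> exists u, 0 < u < 1 /\ Rpower u q < eps.
Proof.
  intros Hq Heps.
  pose proof (Rmin_l (eps / 2) (1 / 2)); pose proof (Rmin_r (eps / 2) (1 / 2)).
  assert (0 < Rmin (eps / 2) (1 / 2)) by (apply Rmin_glb_lt; lra).
  set (v := Rmin (eps / 2) (1 / 2)) in *.
  exists (Rpower v (/ q)); split; [split|].
  - apply Rpower_pos.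
  - unfold Rpower; rewrite <- exp_0; apply exp_increasing.
    pose proof (Rinv_0_lt_compat q Hq).
    assert (ln v < 0) by (rewrite <- ln_1; apply ln_increasing; lra); nra.
  - rewrite Rpower_mult, Rinv_l, Rpower_1 by lra; lra.
Qed.

Lemma Gm_neg_near_1 a b m : 0 < a < 1 -> 0 < b -> a + b < 1 -> a + b < m ->
  exists t, 0 < t < 1 /\ Gm a b m t < 0.
Proof.
  intros Ha Hb Hab Hm.
  set (s := (m - a - b) / 2); assert (Hs : 0 < s) by (unfold s; lra).
  destruct (hypF_le_Rpower (1 - a) b (2 * b + 1) s ltac:(lra) Hb ltac:(lra) Hs ltac:(lra))
    as [K [HK Hupper]].
  destruct (Rpower_lt_eps s (/ K) Hs ltac:(apply Rinv_0_lt_compat; lra)) as [u [Hu Hsmall]].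
  exists (1 - u); split; [lra|].
  destruct (Hupper (1 - u) ltac:(lra)) as [_ Hupper_u].
  pose proof (hypF_ge_Rpower (1 - a) (b + 1) (2 * b + 1) (1 - a - b) (1 - u)
    ltac:(lra) ltac:(lra) ltac:(lra) ltac:(lra) ltac:(intros; nra) ltac:(lra)) as Hlower_u.
  unfold Gm; replace (1 - (1 - u)) with u in * by ring.
  set (X := Rpower u (- s)) in *.
  assert (HX : K < X).
  { unfold X; rewrite Rpower_Ropp, <- (Rinv_inv K).
    apply Rinv_lt_contravar; [|exact Hsmall].
    apply Rmult_lt_0_compat; [apply Rpower_pos | apply Rinv_0_lt_compat; lra]. }
  assert (Hsplit : Rpower u (1 - m) * Rpower u (- (1 - a - b)) = X * X).
  { unfold X; rewrite <- !Rpower_plus; f_equal; unfold s; field. }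
  pose proof (Rmult_le_compat_l _ _ _ (Rlt_le _ _ (Rpower_pos u (1 - m))) Hlower_u).
  assert (K * X < X * X) by (apply Rmult_lt_compat_r; lra).
  lra.
Qed.

Lemma Gm_pos_near_1 a b m : 0 < a < 1 -> 0 < b -> m < 1 -> m < a + b ->
  exists t, 0 < t < 1 /\ 0 < Gm a b m t.
Proof.
  intros Ha Hb Hm1 Hm.
  pose proof (Rmax_l 0 (1 - a - b)); pose proof (Rmax_r 0 (1 - a - b)).
  assert (Rmax 0 (1 - a - b) < 1 - m) by (apply Rmax_lub_lt; lra).
  (* any exponent strictly between [max 0 (1 - a - b)] and [1 - m] works *)
  set (s := (1 - m + Rmax 0 (1 - a - b)) / 2).
  destruct (hypF_le_Rpower (1 - a) (b + 1) (2 * b + 1) s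
    ltac:(lra) ltac:(lra) ltac:(lra) ltac:(unfold s; lra) ltac:(unfold s; lra)) as [K [HK Hupper]].
  destruct (Rpower_lt_eps (1 - m - s) (/ K) ltac:(unfold s; lra)
    ltac:(apply Rinv_0_lt_compat; lra)) as [u [Hu Hsmall]].
  exists (1 - u); split; [lra|].
  destruct (Hupper (1 - u) ltac:(lra)) as [_ Hupper_u].
  pose proof (hypF_ge_1 (1 - a) b (2 * b + 1) (1 - u) ltac:(lra) Hb ltac:(lra) ltac:(lra)).
  unfold Gm; replace (1 - (1 - u)) with u in * by ring.
  assert (Hsplit : Rpower u (1 - m) * Rpower u (- s) = Rpower u (1 - m - s))
    by (rewrite <- Rpower_plus; f_equal; ring).
  assert (Hlt1 : K * Rpower u (1 - m - s) < 1).
  { apply Rmult_lt_compat_l with (r := K) in Hsmall; [|lra].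
    rewrite Rinv_r in Hsmall by lra; exact Hsmall. }
  pose proof (Rmult_le_compat_l _ _ _ (Rlt_le _ _ (Rpower_pos u (1 - m))) Hupper_u).
  nra.
Qed.

Theorem lemma4 (a b m : R) (ha : 0 < a < 1) (hb : 0 < b) :
  ((forall t : R, 0 < t < 1 -> 0 <= Gm a b m t) -> E_plus a b m) /\
  ((forall t : R, 0 < t < 1 -> Gm a b m t <= 0) -> E_minus a b m).
Proof.
  (* [m = a + b] lies below [m0] exactly when [a + b <= 1/2] *)
  assert (Hm0 : m0 a b * (1 + 2 * b) = a + 2 * b) by (unfold m0; field; lra).
  assert (Hm0_lt_1 : m0 a b < 1) by nra.
  split.
  - intros Hpos; pose proof (Gm_nonneg_le_m0 a b m ha hb Hpos) as Hle.
    split; [exact Hle|].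
    destruct (Rlt_le_dec (a + b) 1) as [Hab|Hab]; [|left; lra].
    destruct (Rtotal_order m (a + b)) as [Hlt|[Heq|Hgt]]; [right; left; lra | right; right; nra|].
    destruct (Gm_neg_near_1 a b m ha hb Hab Hgt) as [t [Ht Hneg]].
    pose proof (Hpos t Ht); lra.
  - intros Hneg; pose proof (Gm_nonpos_ge_m0 a b m ha hb Hneg) as Hge.
    split; [lra|].
    assert (Hm : 1 <= m \/ a + b <= m).
    { destruct (Rlt_le_dec m 1) as [Hm1|]; [|left; lra].
      destruct (Rlt_le_dec m (a + b)) as [Hlt|]; [|right; lra].
      destruct (Gm_pos_near_1 a b m ha hb Hm1 Hlt) as [t [Ht Hpos]].
      pose proof (Hneg t Ht); lra. }
    destruct (Rlt_le_dec (a + b) 1) as [Hab|Hab]; [|left; lra].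
    destruct (Rtotal_order m (a + b)) as [Hlt|[Heq|Hgt]];
      [lra | right; left; nra | right; right; lra].
Qed.
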